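(* Let $s_1,\dots,s_k$ be positive integers. For a continuous function $f$ on $[0,1]$ define $D_{s_1,\dots,s_k}f$ as the iterated integral $$D_{s_1,\dots,s_k}f=\int_0^1 x_0^{s_1-1}x_1\,\chi_{s_2}\cdots\chi_{s_k}\,\overline{f(t)\,dt},$$ where $x_0=\frac{dt}{t}$, $x_1=\frac{dt}{1-t}$, and $\chi_1=\overline{x_1}$, $\chi_2=\overline{x_0}\,x_1$, $\chi_s=\overline{x_0}\,x_0^{s-2}x_1$ for $s\ge3$. Then for every positive integer $n$, $$D_{s_1,\dots,s_k}\big(n x^{n-1}\big)=\sum_{n\ge n_k\ge n_{k-1}\ge\cdots\ge n_1\ge1}\frac{1}{n_1^{s_1}n_2^{s_2}\cdots n_k^{s_k}}.$$
   Context: Iterated integral with bars: for differential forms $\omega_j=g_j(t)\,dt$ on $[0,1]$, $\int_0^1\omega_1\omega_2\cdots\omega_m$ (with some of $\omega_2,\dots,\omega_m$ carrying a bar) denotes $\int_0^1 g_1(u_1)\,du_1\int_{I_2}g_2(u_2)\,du_2\cdots\int_{I_m}g_m(u_m)\,du_m$, where $I_j=(0,u_{j-1})$ if $\omega_j$ carries no bar and $I_j=(u_{j-1},1)$ if $\omega_j$ carries a bar. The first form never carries a bar. Thus the last factor $\overline{f(t)dt}$ means the innermost integral is $\int_{u}^1 f(t)\,dt$ where $u$ is the previous variable. *)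

From HB Require Import structures.
From mathcomp Require Import all_boot all_order all_algebra.
From mathcomp Require Import all_classical all_reals all_analysis.
Set Implicit Arguments. Unset Strict Implicit. Unset Printing Implicit Defensive.
Import Order.TTheory GRing.Theory Num.Theory.
Local Open Scope classical_set_scope.
Local Open Scope ring_scope.

(* A differential form g(t) dt together with a flag: true = carries a bar. *)
Definition form (R : realType) := ((R -> R) * bool)%type.

(* Inner iterated integral: given the previous variable u, the list of the
   remaining forms ws = w_j ... w_m is integrated as
   int_{I_j} g_j(v) (inner integral of the rest at v) dv,
   with I_j = (0,u) (no bar) or (u,1) (bar).  Lebesgue integral over the
   open interval, extended-real valued (all integrands in the statement are
   nonnegative, so this is the improper integral, possibly +oo). *)
Fixpoint iint_from (R : realType) (ws : seq (form R)) (u : R) : \bar R :=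
  match ws with
  | [::] => 1%E
  | (g, b) :: ws' =>
      \int[lebesgue_measure]_(v in (if b then `]u, 1%R[ else `]0%R, u[)%classic)
          ((g v)%:E * iint_from ws' v)%E
  end.

(* Full iterated integral int_0^1 w_1 ... w_m ; the first form carries no bar,
   so its domain (0,u) with u = 1 is (0,1). *)
Definition iint (R : realType) (ws : seq (form R)) : \bar R := iint_from ws 1.

Definition x0 (R : realType) (b : bool) : form R := (fun t : R => t^-1, b).
Definition x1 (R : realType) (b : bool) : form R := (fun t : R => (1 - t)^-1, b).

Definition chi (R : realType) (s : nat) : seq (form R) :=
  if s == 1%N then [:: x1 R true]
  else x0 R true :: nseq (s - 2) (x0 R false) ++ [:: x1 R false].

Definition Dword (R : realType) (s : seq nat) (f : R -> R) : seq (form R) :=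
  match s with
  | [::] => [:: (f, true)]
  | s1 :: rest =>
      nseq s1.-1 (x0 R false) ++ [:: x1 R false] ++ flatten (map (@chi R) rest)
        ++ [:: (f, true)]
  end.

Definition D (R : realType) (s : seq nat) (f : R -> R) : \bar R := iint (Dword s f).

(* sum over n >= n_k >= ... >= n_1 >= 1 of 1/(n_1^s_1 ... n_k^s_k);
   n_i is represented as (v i).+1 with v i : 'I_n. *)
Definition mzv_trunc (R : realType) (s : seq nat) (n : nat) : R :=
  \sum_(v : {ffun 'I_(size s) -> 'I_n} |
          [forall i : 'I_(size s), forall j : 'I_(size s), (i <= j)%N ==> (v i <= v j)%N])
    \prod_(i < size s) (((v i).+1%:R : R) ^+ nth 0%N s i)^-1.

(* Each inner integral of the word is a polynomial of degree at most n in the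
   previous variable, vanishing at 0 (no bar) or at 1 (bar).  Integrating
   against x_0 = dt/t turns the coefficients c_l into c_l / l, and integrating
   against x_1 = dt/(1-t) turns them into (c_l + ... + c_n) / l, because
   (1 - t^m)/(1 - t) = 1 + t + ... + t^(m-1).  Starting from the last integral
   1 - u^n, the coefficients produced by chi_(s_k), ..., chi_(s_2) and
   x_0^(s_1-1) x_1 are nested sums over n >= n_k >= ... >= n_1, and evaluating
   at u = 1 adds them up. *)

From Pilot Require Import Defs.
From HB Require Import structures.
From mathcomp Require Import all_boot all_order all_algebra.
From mathcomp Require Import all_classical all_reals all_analysis.
From mathcomp Require Import ring.
Set Implicit Arguments. Unset Strict Implicit. Unset Printing Implicit Defensive.
Import Order.TTheory GRing.Theory Num.Theory.
Import numFieldNormedType.Exports.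
Local Open Scope classical_set_scope.
Local Open Scope ring_scope.

Section IteratedIntegralsOfPolynomials.
Variable R : realType.

Lemma integral_deriv_poly (p : {poly R}) (x y : R) : x <= y ->
  (\int[lebesgue_measure]_(v in `]x, y[) ((p^`()).[v])%:E = (p.[y] - p.[x])%:E)%E.
Proof.
rewrite le_eqVlt => /predU1P[<-|xy]; first by rewrite set_itvoo0 integral_set0 subrr.
rewrite -(@integral_itv_bndoo _ x y _ true false); last first.
  by apply/measurable_realfun.measurable_EFinP; exact: measurable_poly.
rewrite (@continuous_FTC2 _ _ (horner p)) //.
- by apply/continuous_subspaceT => z; exact/continuous_horner.
- split=> [z _| |].
  + exact: derivable_horner.
  + by apply: cvg_at_right_filter; exact: continuous_horner.
  + by apply: cvg_at_left_filter; exact: continuous_horner.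
- by move=> z _; rewrite -derivE.
Qed.

Lemma iint_from_cons_deriv (g : R -> R) b (tl : seq (Defs.form R)) (p : {poly R}) :
  (forall v, 0 < v < 1 -> ((g v)%:E * iint_from tl v = ((p^`()).[v])%:E)%E) ->
  forall u, 0 <= u <= 1 ->
  iint_from ((g, b) :: tl) u = (if b then p.[1] - p.[u] else p.[u] - p.[0])%:E.
Proof.
move=> gtl u /andP[u0 u1] /=; case: b.
- rewrite -integral_deriv_poly //; apply: eq_integral => v.
  by rewrite inE /= in_itv /= => /andP[uv v1]; rewrite gtl // v1 (le_lt_trans u0 uv).
- rewrite -integral_deriv_poly //; apply: eq_integral => v.
  by rewrite inE /= in_itv /= => /andP[v0 vu]; rewrite gtl // v0 (lt_le_trans vu u1).
Qed.

Variable n : nat.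

Definition lower_val (c : nat -> R) (u : R) := \sum_(l < n.+1) c l * u ^+ l.
Definition upper_val (c : nat -> R) (u : R) := \sum_(l < n.+1) c l * (1 - u ^+ l).

(* The inner integral of [tl] is the polynomial with coefficients [c], written
   in the form vanishing at 0 if the first form of [tl] has no bar, and in the
   form vanishing at 1 if it has one. *)
Definition iint_coefs (tl : seq (Defs.form R)) (b : bool) (c : nat -> R) :=
  forall u, 0 <= u <= 1 ->
  iint_from tl u = (if b then upper_val c u else lower_val c u)%:E.

Definition divpow (j : nat) (c : nat -> R) (l : nat) := c l / l%:R ^+ j.

Definition coef_tail (c : nat -> R) (l : nat) := \sum_(m < n.+1 | (l <= m)%N) c m.

Definition coefXn (l : nat) : R := (l == n)%:R.

Lemma coef_tailS c l :
  coef_tail c l.+1 = \sum_(m < n | (l <= m)%N) c m.+1.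
Proof. by rewrite /coef_tail big_mkcond big_ord_recl /= add0r -big_mkcond. Qed.

Lemma divpowS_at0 j c : divpow j.+1 c 0 = 0.
Proof. by rewrite /divpow expr0n invr0 mulr0. Qed.

Lemma divpowD i j c : divpow i (divpow j c) = divpow (i + j) c.
Proof. by apply/funext => l; rewrite /divpow exprD invfM mulrA mulrAC. Qed.

Lemma lower_val_poly c u : lower_val c u = (\poly_(l < n.+1) c l).[u].
Proof. by rewrite horner_poly. Qed.

Lemma upper_val_poly c u :
  upper_val c u = (\poly_(l < n.+1) c l).[1] - (\poly_(l < n.+1) c l).[u].
Proof.
rewrite !horner_poly -sumrB; apply: eq_bigr => l _.
by rewrite expr1n mulr1 mulrBr mulr1.
Qed.

Lemma deriv_poly_divpow1 c v :
  ((\poly_(l < n.+1) divpow 1 c l)^`()).[v] = \sum_(l < n) c l.+1 * v ^+ l.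
Proof.
rewrite poly_def linear_sum horner_sum big_ord_recl /=.
rewrite linearZ /= derivXn mulr0n scaler0 horner0 add0r.
apply: eq_bigr => l _; rewrite linearZ /= derivXn hornerZ hornerMn hornerXn.
by rewrite /bump /= add1n add0n /divpow expr1 -mulr_natr; field; rewrite nat1r pnatr_eq0.
Qed.

Lemma iint_coefs_cons (g : R -> R) b tl c :
  (forall v, 0 < v < 1 ->
     ((g v)%:E * iint_from tl v = (\sum_(l < n) c l.+1 * v ^+ l)%:E)%E) ->
  iint_coefs ((g, b) :: tl) b (divpow 1 c).
Proof.
move=> gtl u u01.
have p0 : (\poly_(l < n.+1) divpow 1 c l).[0] = 0.
  by rewrite horner_coef0 coef_poly divpowS_at0.
rewrite (@iint_from_cons_deriv _ _ _ (\poly_(l < n.+1) divpow 1 c l)) //.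
  by rewrite upper_val_poly lower_val_poly p0 subr0.
by move=> v v01; rewrite deriv_poly_divpow1 gtl.
Qed.

Lemma mul_inv_lower_val c v : c 0%N = 0 -> v != 0 ->
  v^-1 * lower_val c v = \sum_(l < n) c l.+1 * v ^+ l.
Proof.
move=> c0 v0; rewrite /lower_val big_ord_recl c0 mul0r add0r mulr_sumr.
by apply: eq_bigr => l _; rewrite exprS mulrCA mulKf.
Qed.

Lemma mul_inv_upper_val a v : v != 1 ->
  (1 - v)^-1 * upper_val a v = \sum_(l < n) coef_tail a l.+1 * v ^+ l.
Proof.
move=> v1; have v1' : 1 - v != 0 by rewrite subr_eq0 eq_sym.
apply: (mulfI v1'); rewrite mulrA mulfV // mul1r.
transitivity ((1 - v) * \sum_(m < n.+1) \sum_(l < n | (l < m)%N) a m * v ^+ l).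
  rewrite mulr_sumr; apply: eq_bigr => m _.
  rewrite -mulr_sumr -(big_ord_widen n (fun l => v ^+ l) (ltn_ord m)) mulrCA.
  by rewrite -opprB subrX1 -mulNr opprB.
rewrite (exchange_big_dep xpredT) //=; congr (_ * _); apply: eq_bigr => l _.
by rewrite /coef_tail mulr_suml.
Qed.

Lemma iint_coefs_x0 b tl c : c 0%N = 0 -> iint_coefs tl false c ->
  iint_coefs (x0 R b :: tl) b (divpow 1 c).
Proof.
move=> c0 htl; apply: iint_coefs_cons => v /andP[v0 v1].
by rewrite htl ?v0 ?ltW // -EFinM -mul_inv_lower_val ?gt_eqF.
Qed.

Lemma iint_coefs_x1 b tl a : iint_coefs tl true a ->
  iint_coefs (x1 R b :: tl) b (divpow 1 (coef_tail a)).
Proof.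
move=> htl; apply: iint_coefs_cons => v /andP[v0 v1].
by rewrite htl ?ltW ?v1 // -EFinM -mul_inv_upper_val ?lt_eqF.
Qed.

Lemma iint_coefs_density :
  iint_coefs [:: ((fun x : R => n%:R * x ^+ n.-1), true)] true coefXn.
Proof.
move=> u u01; rewrite (@iint_from_cons_deriv _ _ _ 'X^n) //.
  rewrite !hornerXn expr1n /upper_val big_ord_recr /= /coefXn eqxx mul1r.
  by rewrite big1 ?add0r // => l _; rewrite ltn_eqF // mul0r.
by move=> v _; rewrite mule1 derivXn hornerMn hornerXn mulr_natl.
Qed.

Lemma iint_coefs_x0_nseq j tl c : iint_coefs tl false (divpow 1 c) ->
  iint_coefs (nseq j (x0 R false) ++ tl) false (divpow j.+1 c).
Proof.
elim: j => [//|j IH] htl; rewrite -[j.+2]/(1 + j.+1)%N -divpowD.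
by apply: iint_coefs_x0; [exact: divpowS_at0 | exact: IH].
Qed.

Lemma iint_coefs_chi s tl a : (0 < s)%N -> iint_coefs tl true a ->
  iint_coefs (chi R s ++ tl) true (divpow s (coef_tail a)).
Proof.
case: s => [|[|k]] // _ htl; first exact: iint_coefs_x1.
rewrite /chi /= -catA subn2 /= -[k.+2]/(1 + k.+1)%N -divpowD.
apply: iint_coefs_x0; first exact: divpowS_at0.
by apply: iint_coefs_x0_nseq; exact: iint_coefs_x1.
Qed.

Fixpoint word_coef (s : seq nat) : nat -> R :=
  if s is s1 :: r then divpow s1 (coef_tail (word_coef r)) else coefXn.

Lemma iint_coefs_chis s : all (fun si => 0 < si)%N s ->
  iint_coefs (flatten (map (@chi R) s) ++ [:: ((fun x : R => n%:R * x ^+ n.-1), true)])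
    true (word_coef s).
Proof.
elim: s => [_|s1 r IH /= /andP[s1_gt0 r_gt0]]; first exact: iint_coefs_density.
by rewrite -catA; apply: iint_coefs_chi => //; exact: IH.
Qed.

Lemma D_density s1 r : (0 < s1)%N -> all (fun si => 0 < si)%N r ->
  D (s1 :: r) (fun x : R => n%:R * x ^+ n.-1)
    = (\sum_(l < n.+1) word_coef (s1 :: r) l)%:E.
Proof.
move=> s1_gt0 r_gt0; rewrite /D /iint /Dword /=.
have := iint_coefs_x0_nseq s1.-1 (iint_coefs_x1 false (iint_coefs_chis r_gt0)).
rewrite prednK // => /(_ 1); rewrite ler01 lexx => /(_ isT) ->.
by congr EFin; apply: eq_bigr => l _; rewrite expr1n mulr1.
Qed.

Definition nondecreasing_ffun k (v : {ffun 'I_k -> 'I_n}) :=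
  [forall i : 'I_k, forall j : 'I_k, (i <= j)%N ==> (v i <= v j)%N].

Definition mzv_trunc_from (s : seq nat) (L : nat) : R :=
  \sum_(v : {ffun 'I_(size s) -> 'I_n} |
          nondecreasing_ffun v && [forall i, (L <= v i)%N])
    \prod_(i < size s) (((v i).+1%:R : R) ^+ nth 0%N s i)^-1.

Definition ffun_cons k (x : 'I_n) (w : {ffun 'I_k -> 'I_n}) : {ffun 'I_k.+1 -> 'I_n} :=
  [ffun i => if unlift ord0 i is Some j then w j else x].

Definition ffun_behead k (v : {ffun 'I_k.+1 -> 'I_n}) : {ffun 'I_k -> 'I_n} :=
  [ffun j => v (lift ord0 j)].

Lemma ffun_cons0 k x (w : {ffun 'I_k -> 'I_n}) : ffun_cons x w ord0 = x.
Proof. by rewrite ffunE unlift_none. Qed.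

Lemma ffun_consS k x (w : {ffun 'I_k -> 'I_n}) j : ffun_cons x w (lift ord0 j) = w j.
Proof. by rewrite ffunE liftK. Qed.

Lemma ffun_beheadK k (v : {ffun 'I_k.+1 -> 'I_n}) :
  ffun_cons (v ord0) (ffun_behead v) = v.
Proof.
by apply/ffunP => i; rewrite ffunE; case: (unliftP ord0 i) => [j|] ->; rewrite ?ffunE.
Qed.

Lemma ffun_consK k x (w : {ffun 'I_k -> 'I_n}) : ffun_behead (ffun_cons x w) = w.
Proof. by apply/ffunP => j; rewrite ffunE ffun_consS. Qed.

Lemma nondecreasing_ffun_cons k x (w : {ffun 'I_k -> 'I_n}) :
  nondecreasing_ffun (ffun_cons x w) = nondecreasing_ffun w && [forall i, (x <= w i)%N].
Proof.
apply/idP/andP => [/forallP mono_xw | [/forallP mono_w /forallP x_le_w]].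
  split; apply/forallP => i; last first.
    by have /forallP/(_ (lift ord0 i)) := mono_xw ord0; rewrite ffun_cons0 ffun_consS.
  apply/forallP => j; apply/implyP => ij.
  have /forallP/(_ (lift ord0 j))/implyP := mono_xw (lift ord0 i).
  by rewrite !ffun_consS; apply.
apply/forallP => i; apply/forallP => j; apply/implyP.
case: (unliftP ord0 i) => [i'|] ->; case: (unliftP ord0 j) => [j'|] ->;
  rewrite ?ffun_consS ?ffun_cons0 // => ij.
by have /forallP/(_ j')/implyP := mono_w i'; apply.
Qed.

Lemma mzv_trunc_from_cons s1 r L :
  mzv_trunc_from (s1 :: r) L
    = \sum_(x < n | (L <= x)%N) ((x.+1%:R : R) ^+ s1)^-1 * mzv_trunc_from r x.
Proof.
rewrite /mzv_trunc_from /=.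
rewrite (partition_big (fun v : {ffun _ -> 'I_n} => v ord0) (fun x : 'I_n => (L <= x)%N));
  last by move=> v /andP[_ /forallP /(_ ord0)].
apply: eq_bigr => x Lx.
rewrite (reindex_onto (ffun_cons x) (@ffun_behead _)) /=;
  last by move=> v /andP[_ /eqP <-]; rewrite ffun_beheadK.
rewrite mulr_sumr; apply: eq_big => w.
  rewrite ffun_consK eqxx andbT ffun_cons0 eqxx andbT nondecreasing_ffun_cons.
  case: (nondecreasing_ffun w) => //=; apply/andP/idP => [[] // | x_le_w].
  split=> //; apply/forallP => i.
  case: (unliftP ord0 i) => [j|] ->; rewrite ?ffun_cons0 ?ffun_consS //.
  exact: leq_trans Lx (forallP x_le_w j).
by move=> _; rewrite big_ord_recl ffun_cons0; congr (_ * _); apply: eq_bigr => i _;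
  rewrite ffun_consS.
Qed.

Lemma mzv_trunc_from_nil L : mzv_trunc_from [::] L = 1.
Proof.
rewrite /mzv_trunc_from /= (eq_bigl xpredT); last first.
  by move=> v; apply/andP; split; apply/forallP => -[].
rewrite (eq_bigr (fun=> 1)); last by move=> v _; rewrite big_ord0.
by rewrite sumr_const card_ffun !card_ord.
Qed.

Lemma coef_tail_word_coef s L : (L < n)%N ->
  coef_tail (word_coef s) L.+1 = mzv_trunc_from s L.
Proof.
elim: s L => [|s1 r IH] L Ln.
  rewrite mzv_trunc_from_nil /coef_tail big_mkcond big_ord_recr /= Ln /coefXn eqxx.
  by rewrite big1 ?add0r // => i _; rewrite (ltn_eqF (ltn_ord i)); case: ifP.
rewrite mzv_trunc_from_cons coef_tailS.
by apply: eq_bigr => x _; rewrite /= /divpow mulrC IH.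
Qed.

Lemma sum_word_coef s1 r : (0 < s1)%N -> (0 < n)%N ->
  \sum_(l < n.+1) word_coef (s1 :: r) l = mzv_trunc R (s1 :: r) n.
Proof.
case: s1 => // s1 _ n_gt0.
rewrite big_ord_recl [word_coef _ _]divpowS_at0 add0r.
transitivity (mzv_trunc_from (s1.+1 :: r) 0).
  by rewrite -coef_tail_word_coef // coef_tailS.
by apply: eq_bigl => v; rewrite andb_idr // => _; apply/forallP.
Qed.

End IteratedIntegralsOfPolynomials.

Theorem lemma4p3 (R : realType) (s : seq nat) (n : nat) :
  (0 < size s)%N -> all (fun si => 0 < si)%N s -> (0 < n)%N ->
  D s (fun x : R => n%:R * x ^+ n.-1) = (mzv_trunc R s n)%:E.
Proof.
case: s => // s1 r _ /andP[s1_gt0 r_gt0] n_gt0.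
by rewrite D_density // sum_word_coef.
Qed.
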